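(* Let $j,r\in\mathbb{N}$. Then for all $n\in\mathbb{N}$: $c_j^{(r-1)}(n)\le c_j^{(r)}(n)$; in particular $c_j(n)\le c_j^{(r)}(n)$; and moreover $c_j^{(r)}(n)\le d_{j+r}(n)$.
   Context: For $j,n\in\mathbb{N}$, $d_j(n)$ is the number of ordered $j$-tuples of positive integers with product $n$, and $c_j(n)$ is the number of ordered $j$-tuples of integers each $\ge 2$ with product $n$. The associated divisor functions are defined by $c_j^{(0)}=c_j$ and $c_j^{(r)}(n)=\sum_{m\mid n}c_j^{(r-1)}(m)$ for $r,n\in\mathbb{N}$. *)

From mathcomp Require Import all_boot.
Set Implicit Arguments. Unset Strict Implicit. Unset Printing Implicit Defensive.

(* d_j(n): number of ordered j-tuples of positive integers with product n.
   Every entry of such a tuple divides n, hence lies in {0,...,n}, so we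
   count j-tuples over 'I_n.+1 with positive entries and product n. *)
Definition dfun (j n : nat) : nat :=
  #|[set t : j.-tuple 'I_n.+1 |
      all (fun x : 'I_n.+1 => 0 < val x) t && (\prod_(x <- t) val x == n)]|.

Definition cfun (j n : nat) : nat :=
  #|[set t : j.-tuple 'I_n.+1 |
      all (fun x : 'I_n.+1 => 1 < val x) t && (\prod_(x <- t) val x == n)]|.

Fixpoint cfunr (j r n : nat) : nat :=
  match r with
  | 0 => cfun j n
  | r'.+1 => \sum_(m <- divisors n) cfunr j r' m
  end.

From mathcomp Require Import all_boot.

Set Implicit Arguments.
Unset Strict Implicit.
Unset Printing Implicit Defensive.

(* Splitting off the first entry of a tuple whose entries multiply to [n] shows
   that [d_(k+1)(n) = \sum_(m | n) d_k(m)], so [d_k] is the Piltz divisor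
   function, the [k]-fold Dirichlet convolution of [1]. As [c_j^(r)] obeys the
   same recursion in [r] and [c_j <= d_j], induction on [r] gives
   [c_j^(r) <= d_(j+r)]. Monotonicity in [r] holds because [n] is among its own
   divisors. *)

Lemma big_tuple_cons (R : Type) (idx : R) (op : Monoid.com_law idx)
    (T : finType) k (F : k.+1.-tuple T -> R) :
  \big[op/idx]_(t : k.+1.-tuple T) F t =
  \big[op/idx]_(x : T) \big[op/idx]_(t : k.-tuple T) F [tuple of x :: t].
Proof.
rewrite pair_big /=.
rewrite (reindex (fun p : T * k.-tuple T => [tuple of p.1 :: p.2])) //=.
exists (fun t : k.+1.-tuple T => (thead t, [tuple of behead t])).
  by case=> x t _; congr (_, _); apply: val_inj.
by move=> t _; rewrite [RHS]tuple_eta; apply: val_inj.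
Qed.

Lemma divn_divnK n d : 0 < n -> d %| n -> n %/ (n %/ d) = d.
Proof. by move=> n_gt0 d_dvd_n; rewrite divnA // mulKn. Qed.

Lemma perm_divisors_divn n :
  0 < n -> perm_eq [seq n %/ d | d <- divisors n] (divisors n).
Proof.
move=> n_gt0; apply: uniq_perm; last 2 first.
- exact: divisors_uniq.
- move=> m; rewrite -dvdn_divisors //; apply/mapP/idP.
    by case=> d; rewrite -dvdn_divisors // => /dvdn_div + ->.
  move=> m_dvd_n; exists (n %/ m); first by rewrite -dvdn_divisors ?dvdn_div.
  by rewrite divn_divnK.
rewrite map_inj_in_uniq ?divisors_uniq //.
apply: (can_in_inj (g := divn n)) => d; rewrite -dvdn_divisors //.
exact: divn_divnK.
Qed.

Lemma big_ord_divisors (R : Type) (idx : R) (op : Monoid.com_law idx)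
    N n (F : nat -> R) : 0 < n -> n < N ->
  \big[op/idx]_(x < N | (0 < x) && (x %| n)) F x =
  \big[op/idx]_(d <- divisors n) F d.
Proof.
move=> n_gt0 n_lt_N; rewrite -(big_mkord (fun x => (0 < x) && (x %| n))).
rewrite -big_filter; apply: perm_big; apply: uniq_perm.
- by rewrite filter_uniq ?iota_uniq.
- exact: divisors_uniq.
move=> d; rewrite mem_filter mem_index_iota -dvdn_divisors //.
apply/andP/idP => [[/andP[] //] | d_dvd_n].
have d_le_n := dvdn_leq n_gt0 d_dvd_n.
by rewrite (dvdn_gt0 n_gt0 d_dvd_n) d_dvd_n (leq_ltn_trans d_le_n n_lt_N).
Qed.

Fixpoint piltz (k n : nat) : nat :=
  if k is k'.+1 then \sum_(d <- divisors n) piltz k' d else n == 1.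

(* [dfun k n] counts the same tuples over ['I_n.+1]; the bound [N] is left free
   because the recursion passes from [n] to its divisors with [N] fixed. *)
Definition ptuples_prod (N k n : nat) : nat :=
  \sum_(t : k.-tuple 'I_N)
     (all (fun x : 'I_N => 0 < val x) t && (\prod_(x <- t) val x == n)).

Lemma ptuples_prod0 N n : ptuples_prod N 0 n = (n == 1).
Proof.
rewrite /ptuples_prod (eq_bigr (fun _ => (1 == n : nat))); last first.
  by move=> t _; rewrite tuple0 big_nil.
by rewrite sum_nat_const card_tuple expn0 mul1n eq_sym.
Qed.

Lemma ptuples_prodS N k n : 0 < n ->
  ptuples_prod N k.+1 n =
  \sum_(x < N | (0 < x) && (x %| n)) ptuples_prod N k (n %/ x).
Proof.
move=> n_gt0; rewrite /ptuples_prod big_tuple_cons [RHS]big_mkcond /=.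
apply: eq_bigr => x _; case: ifP => [/andP[x_gt0 x_dvd_n] | x_ndvd_n].
  apply: eq_bigr => t _; rewrite big_cons x_gt0 /=.
  by rewrite eqn_div // mulnC.
rewrite big1 // => t _; rewrite big_cons /=.
case: (ltnP 0 x) x_ndvd_n => //= x_gt0 /negbT x_ndvd_n.
case: eqP => [prod_eq | _]; last by rewrite andbF.
by rewrite -prod_eq dvdn_mulr in x_ndvd_n.
Qed.

Lemma ptuples_prod_piltz N k n : 0 < n -> n < N -> ptuples_prod N k n = piltz k n.
Proof.
elim: k n => [|k IHk] n n_gt0 n_lt_N; first exact: ptuples_prod0.
rewrite ptuples_prodS //=.
rewrite (eq_bigr (fun x : 'I_N => piltz k (n %/ x))); last first.
  move=> x /andP[x_gt0 x_dvd_n]; apply: IHk.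
    by rewrite divn_gt0 // dvdn_leq.
  exact: leq_ltn_trans (leq_div n x) n_lt_N.
rewrite (big_ord_divisors _ (fun x => piltz k (n %/ x))) //.
by rewrite -(big_map (divn n) xpredT) (perm_big _ (perm_divisors_divn n_gt0)).
Qed.

Lemma dfun_piltz k n : 0 < n -> dfun k n = piltz k n.
Proof.
move=> n_gt0; rewrite -(ptuples_prod_piltz k n_gt0 (ltnSn n)).
rewrite /dfun /ptuples_prod -sum1_card big_mkcond /=.
by apply: eq_bigr => t _; rewrite inE; case: ifP.
Qed.

Lemma cfun_le_dfun k n : cfun k n <= dfun k n.
Proof.
apply: subset_leq_card; apply/subsetP => t; rewrite !inE => /andP[/allP all_gt1 ->].
by rewrite andbT; apply/allP => x /all_gt1; apply: ltnW.
Qed.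

Lemma cfunr_leS j r n : 0 < n -> cfunr j r n <= cfunr j r.+1 n.
Proof. by move=> n_gt0 /=; rewrite (big_rem n) ?divisors_id ?leq_addr. Qed.

Lemma cfun_le_cfunr j r n : 0 < n -> cfun j n <= cfunr j r n.
Proof.
by move=> n_gt0; elim: r => [//|r IHr]; apply: leq_trans IHr (cfunr_leS _ _ n_gt0).
Qed.

Lemma cfunr_le_piltz j r n : 0 < n -> cfunr j r n <= piltz (j + r) n.
Proof.
elim: r n => [|r IHr] n n_gt0; first by rewrite addn0 -dfun_piltz ?cfun_le_dfun.
rewrite addnS /= !big_seq; apply: leq_sum => d; rewrite -dvdn_divisors // => d_dvd_n.
exact/IHr/(dvdn_gt0 n_gt0 d_dvd_n).
Qed.

Theorem lemma16 (j r : nat) (hj : 0 < j) (hr : 0 < r) :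
  forall n : nat, 0 < n ->
    [/\ cfunr j r.-1 n <= cfunr j r n,
        cfun j n <= cfunr j r n &
        cfunr j r n <= dfun (j + r) n].
Proof.
move=> n n_gt0; split.
- by case: r hr => // r _; apply: cfunr_leS.
- exact: cfun_le_cfunr.
- by rewrite dfun_piltz //; apply: cfunr_le_piltz.
Qed.
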